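(* Let $A$ be an alphabet and let $w,v\in A^{*}$ with $wv\ne\varepsilon$; put $u=wv$ and $u'=vw$. Then $\rho_{u}=\rho_{u'}$, and hence $S_{u}=S_{u'}$.
   Context: For $u\in A^{+}$, $\langle u\rangle=\{u^{m}:m\ge1\}$ and $\rho_{u}$ is the syntactic congruence of $\langle u\rangle$ on $A^{+}$: for $x,y\in A^{+}$, $x\rho_{u}y$ iff for all $p,q\in A^{*}$, $pxq\in\langle u\rangle\Leftrightarrow pyq\in\langle u\rangle$. $S_{u}=A^{+}/\rho_{u}$. *)

(* Words over an alphabet A are sequences [seq A];
   A^+ = nonempty sequences, A^* = all sequences, product = concatenation. *)
From mathcomp Require Import all_boot.
Set Implicit Arguments. Unset Strict Implicit. Unset Printing Implicit Defensive.

Definition wpow (A : Type) (u : seq A) (m : nat) : seq A := flatten (nseq m u).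

Definition in_powers (A : Type) (u s : seq A) : Prop :=
  exists m : nat, (1 <= m)%N /\ s = wpow u m.

Definition rho (A : Type) (u x y : seq A) : Prop :=
  forall p q : seq A, in_powers u (p ++ x ++ q) <-> in_powers u (p ++ y ++ q).

(* Conjugating by w, s |-> w s v, sends (vw)^m to (wv)^(m+1), and a power of
   wv of the form w s v with s nonempty is always such an image.  Hence
   p x q lies in <vw> iff (w p) x (q v) lies in <wv>, so a context
   distinguishing x and y for vw yields one for wv; the converse is the same
   argument with w and v exchanged. *)
From mathcomp Require Import all_boot.

Section Conjugation.
Variable A : Type.
Implicit Types (s w v x y : seq A).

Lemma catsI s : injective (cat s).
Proof. by elim: s => //= a s IHs t1 t2 [/IHs]. Qed.

Lemma catIs s : injective (cat^~ s).
Proof.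
move=> t1 t2 /(congr1 rev); rewrite !rev_cat => /catsI /(congr1 rev).
by rewrite !revK.
Qed.

Lemma wpow_conj w v m : w ++ wpow (v ++ w) m ++ v = wpow (w ++ v) m.+1.
Proof.
rewrite /wpow; elim: m => [|m IHm] /=; first by rewrite cats0.
by move: IHm => /= <-; rewrite !catA.
Qed.

Lemma in_powers_conj w v s : s <> [::] ->
  in_powers (v ++ w) s <-> in_powers (w ++ v) (w ++ s ++ v).
Proof.
move=> s0; split=> [[m [_ ->]] | [[|m] [_ def_wsv]]].
- by exists m.+1; rewrite wpow_conj.
- by move: def_wsv; case: w s s0 => [|? ?] [].
rewrite -wpow_conj in def_wsv.
have {def_wsv} def_s := catIs _ _ _ (catsI _ _ _ def_wsv).
by exists m; split=> //; case: m def_s.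
Qed.

Lemma rho_conj w v x y : x <> [::] -> y <> [::] ->
  rho (w ++ v) x y -> rho (v ++ w) x y.
Proof.
have in_ctx (z p q : seq A) : z <> [::] -> p ++ z ++ q <> [::].
  by case: p z => [|? ?] [].
have reassoc z p q : w ++ (p ++ z ++ q) ++ v = (w ++ p) ++ z ++ (q ++ v).
  by rewrite !catA.
move=> x0 y0 rho_xy p q.
apply: iff_trans (in_powers_conj w v _ (in_ctx _ p q x0)) _.
apply: iff_trans _ (iff_sym (in_powers_conj w v _ (in_ctx _ p q y0))).
by rewrite !reassoc; apply: rho_xy.
Qed.

End Conjugation.

Theorem lemma2p4 (A : finType) (w v : seq A) :
  w ++ v <> [::] ->
  forall x y : seq A, x <> [::] -> y <> [::] ->
    (rho (w ++ v) x y <-> rho (v ++ w) x y).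
Proof. by move=> _ x y x0 y0; split; apply: rho_conj. Qed.
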